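(* Let $n\geq 1$ and $0\leq m\leq n$, and let $S$ range over subsets of $\{1,\dots,n\}$ with $|S|=m$, $S^c=\{1,\dots,n\}\setminus S$. Then \begin{equation*} \sum_{\substack{S~\textrm{with}\\|S| = m}} \bigg(\prod_{\substack{\alpha<\beta,\\\alpha,\beta \in S^c}} T_{\beta\alpha}\bigg)\bigg(\prod_{\substack{\alpha<\beta,\\\alpha,\beta \in S}} T_{\beta\alpha}\bigg)\bigg( \prod_{\substack{\alpha<\beta,\\\ \alpha\in S, \beta \in S^c}} S_{\beta\alpha}\bigg) = \frac{[n]!}{[n-m]!\,[m]!}\bigg(\prod_{\substack{\alpha<\beta,\\ \alpha,\beta \in \{1,\dots, n\}} }T_{\beta\alpha}\bigg). \end{equation*}
   Context: Here $p\in(0,1)$, $q=1-p$, and $\xi_1,\dots,\xi_n$ are complex variables, with $S_{\beta\alpha} = -\frac{p+q\xi_{\alpha}\xi_{\beta} - \xi_{\beta}}{p+q\xi_{\alpha}\xi_{\beta} - \xi_{\alpha}}$ and $T_{\beta\alpha} = \frac{\xi_{\beta}-\xi_{\alpha}}{p+q\xi_{\alpha}\xi_{\beta} - \xi_{\alpha}}$. For nonnegative integers $k$, $[k] = \frac{p^k-q^k}{p-q}$, $[k]! = [k][k-1]\cdots[1]$ for $k\geq 1$ and $[0]!=1$. (The $(p,q)$-binomial coefficient $\frac{[n]!}{[n-m]![m]!}$ is defined to be $0$ if $m>n$.) *)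

From mathcomp Require Import all_boot all_order all_algebra.
Set Implicit Arguments. Unset Strict Implicit. Unset Printing Implicit Defensive.
Import Order.TTheory GRing.Theory Num.Theory.
Local Open Scope ring_scope.

(* Indices 1..n of the paper are represented by 'I_n = {0,..,n-1}
   (order-preserving shift). Scalars live in a numClosedFieldType C
   (e.g. algC, or complex numbers). *)

Section Defs.
Variable C : numClosedFieldType.

Definition Sba (p : C) (xi : nat -> C) (b a : nat) : C :=
  - (p + (1 - p) * xi a * xi b - xi b) / (p + (1 - p) * xi a * xi b - xi a).

Definition Tba (p : C) (xi : nat -> C) (b a : nat) : C :=
  (xi b - xi a) / (p + (1 - p) * xi a * xi b - xi a).

(* [k] = (p^k - q^k)/(p - q), written as the polynomial
   sum_{i<k} p^i q^(k-1-i) (equal for p <> q, continuous extension at p = q). *)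
Definition pq_int (p : C) (k : nat) : C :=
  \sum_(i < k) p ^+ i * (1 - p) ^+ (k.-1 - i).

Definition pq_fact (p : C) (k : nat) : C :=
  \prod_(1 <= i < k.+1) pq_int p i.

Definition pq_binom (p : C) (n m : nat) : C :=
  if (m <= n)%N then pq_fact p n / (pq_fact p (n - m) * pq_fact p m) else 0.

End Defs.

From mathcomp Require Import all_boot all_order all_algebra ring zify.
Import Order.TTheory GRing.Theory Num.Theory.
Local Open Scope ring_scope.
Set Implicit Arguments. Unset Strict Implicit. Unset Printing Implicit Defensive.

(* Multiplying by the product D of the denominators p + q xi_a xi_b - xi_a
   (a < b) turns each summand into a polynomial weight w(S) and the right-hand
   side into [n choose m] times the Vandermonde product V.  The polynomial
   identity  sum_{|S| = m} w(S) = B(n, m) V,  with B given by a division-free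
   Pascal recursion, holds over any integral domain, by induction on n.  For
   n + 1 points both sides are polynomials of degree <= n in the last value x.
   At x = xi_c the subsets containing exactly one of c and the last point
   cancel in pairs, the others carrying the factor x - xi_c = 0; at x = 1 every
   factor involving the last point is a multiple of 1 - xi_a, which yields the
   Pascal recursion.  So both sides agree when 1, xi_0, ..., xi_(n-1) are
   distinct, and the general case follows by specialising the distinct
   polynomials xi_i + X^(i+1) at X = 0. *)

Local Notation widenS := (widen_ord (leqnSn _)).

Lemma widenS_inj n : injective (widenS : 'I_n -> 'I_n.+1).
Proof. by move=> i j /(congr1 val) /= /val_inj. Qed.

Lemma widenS_neq_max n (i : 'I_n) : (widenS i == ord_max) = false.
Proof. by rewrite -(inj_eq val_inj) /= ltn_eqF. Qed.

Lemma mem_widenS_imset n (S : {set 'I_n}) i : (widenS i \in widenS @: S) = (i \in S).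
Proof. exact/mem_imset/widenS_inj. Qed.

Lemma max_widenS_imset n (S : {set 'I_n}) : (ord_max \in widenS @: S) = false.
Proof. by apply/imsetP => -[i _ /eqP]; rewrite eq_sym widenS_neq_max. Qed.

Lemma ordS_split n (x : 'I_n.+1) : x = ord_max \/ exists i, x = widenS i.
Proof.
case: (ltnP x n) => [x_lt_n|]; first by right; exists (Ordinal x_lt_n); apply: val_inj.
by left; apply/val_inj/eqP; rewrite /= eqn_leq -ltnS ltn_ord.
Qed.

Lemma sum_subsets_ordS (V : nmodType) n (P : pred {set 'I_n.+1})
    (F : {set 'I_n.+1} -> V) :
  \sum_(S | P S) F S =
    \sum_(S : {set 'I_n} | P (widenS @: S)) F (widenS @: S)
  + \sum_(S : {set 'I_n} | P (ord_max |: widenS @: S)) F (ord_max |: widenS @: S).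
Proof.
have preK (S : {set 'I_n}) : widenS @^-1: (widenS @: S) = S.
  by apply/setP => i; rewrite inE mem_widenS_imset.
have preK1 (S : {set 'I_n}) : widenS @^-1: (ord_max |: widenS @: S) = S.
  by apply/setP => i; rewrite !inE widenS_neq_max mem_widenS_imset.
rewrite (bigID (fun S : {set 'I_n.+1} => ord_max \in S)) [LHS]addrC /=.
congr (_ + _).
  rewrite (reindex_onto (fun S : {set 'I_n} => widenS @: S) (fun S => widenS @^-1: S)) /=.
    by apply: eq_bigl => S; rewrite max_widenS_imset preK eqxx !andbT.
  move=> S /andP[_ S_max]; apply/setP => x.
  case: (ordS_split x) => [->|[i ->]]; first by rewrite max_widenS_imset (negbTE S_max).
  by rewrite mem_widenS_imset inE.
rewrite (reindex_onto (fun S : {set 'I_n} => ord_max |: widenS @: S) (fun S => widenS @^-1: S)) /=.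
  by apply: eq_bigl => S; rewrite setU11 preK1 eqxx !andbT.
move=> S /andP[_ S_max]; apply/setP => x; rewrite !inE.
case: (ordS_split x) => [->|[i ->]]; first by rewrite eqxx S_max.
by rewrite widenS_neq_max mem_widenS_imset inE.
Qed.

Section PairWeights.
Variable R : comNzRingType.
Implicit Types (p x y : R) (xi : nat -> R).

Definition pq_den p x y := p + (1 - p) * x * y - x.

(* For a < b with membership sa, sb of a, b in S, this is T_ba (same side),
   S_ba (a in S, b not) or 1 (b in S, a not), times pq_den p (xi a) (xi b). *)
Definition pair_factor p (sa sb : bool) x y :=
  if sa == sb then y - x else if sa then - pq_den p y x else pq_den p x y.

Lemma pair_factorC p sa sb x y : pair_factor p sb sa y x = - pair_factor p sa sb x y.
Proof. by rewrite /pair_factor eq_sym; case: sa; case: sb; rewrite /= ?opprK ?opprB. Qed.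

Lemma pair_factor_diag p s x : pair_factor p s s x x = 0.
Proof. by rewrite /pair_factor eqxx subrr. Qed.

Definition set_weight p xi n (S : {set 'I_n}) :=
  \prod_(a < n) \prod_(b < n | (a < b)%N) pair_factor p (a \in S) (b \in S) (xi a) (xi b).

Definition weight_sum p xi n m := \sum_(S : {set 'I_n} | #|S| == m) set_weight p xi S.

Definition vandermonde_prod xi n := \prod_(a < n) \prod_(b < n | (a < b)%N) (xi b - xi a).

Definition ext_weight_sum p xi n m y :=
    \sum_(S : {set 'I_n} | #|S| == m)
      set_weight p xi S * \prod_(a < n) pair_factor p (a \in S) false (xi a) y
  + \sum_(S : {set 'I_n} | #|S|.+1 == m)
      set_weight p xi S * \prod_(a < n) pair_factor p (a \in S) true (xi a) y.

(* The (p,q)-binomial coefficient through its Pascal recursion: being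
   division-free, it makes sense over any ring. *)
Fixpoint pq_pascal p n m :=
  if n is n'.+1 then
    (1 - p) ^+ m * pq_pascal p n' m
    + (if m is m'.+1 then p ^+ (n' - m') * pq_pascal p n' m' else 0)
  else (m == 0%N)%:R.

Lemma pq_pascal_n0 p n : pq_pascal p n 0%N = 1.
Proof. by elim: n => [|n IHn] //=; rewrite IHn expr0 mul1r addr0. Qed.

Lemma pq_pascal_gt p n m : (n < m)%N -> pq_pascal p n m = 0.
Proof.
elim: n m => [|n IHn] [|m] //= lt_nm.
have le_nm := ltnW lt_nm.
by rewrite !IHn ?mulr0 ?addr0.
Qed.

Lemma set_weight_recr p xi n (S : {set 'I_n.+1}) (T : {set 'I_n}) :
    (forall i, (widenS i \in S) = (i \in T)) ->
  set_weight p xi S =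
    set_weight p xi T * \prod_(a < n) pair_factor p (a \in T) (ord_max \in S) (xi a) (xi n).
Proof.
move=> memS; rewrite /set_weight big_ord_recr /=.
rewrite [X in _ * X]big_pred0 => [|b]; last by rewrite ltnNge -ltnS ltn_ord.
rewrite mulr1 -big_split /=; apply: eq_bigr => a _.
rewrite big_mkcond big_ord_recr /= ltn_ord -big_mkcond /= !memS.
by congr (_ * _); apply: eq_bigr => b _; rewrite memS.
Qed.

Lemma weight_sum_recr p xi n m : weight_sum p xi n.+1 m = ext_weight_sum p xi n m (xi n).
Proof.
rewrite /weight_sum sum_subsets_ordS; congr (_ + _); apply: eq_big => S.
- by rewrite card_imset //; apply: widenS_inj.
- move=> _; rewrite (set_weight_recr p xi (T := S)) ?max_widenS_imset // => i.
  exact: mem_widenS_imset.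
- by rewrite cardsU1 max_widenS_imset card_imset //; apply: widenS_inj.
- move=> _; rewrite (set_weight_recr p xi (T := S)) ?setU11 // => i.
  by rewrite in_setU1 widenS_neq_max mem_widenS_imset.
Qed.

Lemma vandermonde_prod_recr xi n :
  vandermonde_prod xi n.+1 = vandermonde_prod xi n * \prod_(a < n) (xi n - xi a).
Proof.
rewrite /vandermonde_prod big_ord_recr /=.
rewrite [X in _ * X]big_pred0 => [|b]; last by rewrite ltnNge -ltnS ltn_ord.
rewrite mulr1 -big_split /=; apply: eq_bigr => a _.
by rewrite big_mkcond big_ord_recr /= ltn_ord -big_mkcond.
Qed.

Lemma ext_weight_sum1 p xi n m :
  ext_weight_sum p xi n m 1 = \prod_(a < n) (1 - xi a) *
    ((1 - p) ^+ m * weight_sum p xi n m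
     + (if m is m'.+1 then p ^+ (n - m') * weight_sum p xi n m' else 0)).
Proof.
have out1 (S : {set 'I_n}) : \prod_(a < n) pair_factor p (a \in S) false (xi a) 1
    = (1 - p) ^+ #|S| * \prod_(a < n) (1 - xi a).
  rewrite -prodr_const [in RHS]big_mkcond -big_split /=; apply: eq_bigr => a _.
  by rewrite /pair_factor /pq_den; case: (a \in S) => /=; ring.
have in1 (S : {set 'I_n}) : \prod_(a < n) pair_factor p (a \in S) true (xi a) 1
    = p ^+ (n - #|S|) * \prod_(a < n) (1 - xi a).
  rewrite -[n in (n - _)%N](card_ord n) -(cardsC S) addKn.
  rewrite -prodr_const [in RHS]big_mkcond -big_split /=; apply: eq_bigr => a _.
  by rewrite inE /pair_factor /pq_den; case: (a \in S) => /=; ring.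
rewrite /ext_weight_sum /weight_sum mulrDr; congr (_ + _).
  by rewrite !mulr_sumr; apply: eq_bigr => S /eqP <-; rewrite out1; ring.
case: m => [|m]; first by rewrite big_pred0 ?mulr0.
by rewrite !mulr_sumr; apply: eq_big => // S /eqP[<-]; rewrite in1; ring.
Qed.

Lemma prod_lt_pairs_split n (F : 'I_n -> 'I_n -> R) (c : 'I_n) :
  \prod_(a < n) \prod_(b < n | (a < b)%N) F a b =
    \prod_(a < n | a != c) \prod_(b < n | (b != c) && (a < b)%N) F a b
  * \prod_(a < n | a != c) (if (a < c)%N then F a c else F c a).
Proof.
rewrite (bigD1 c) //= [X in X * _]big_mkcond (bigD1 c) //= ltnn mul1r.
have split_c (a : 'I_n) : \prod_(b < n | (a < b)%N) F a b =
    (if (a < c)%N then F a c else 1) * \prod_(b < n | (b != c) && (a < b)%N) F a b.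
  by rewrite big_mkcond (bigD1 c) //= big_mkcondr.
rewrite (eq_bigr _ (fun a _ => split_c a)) big_split /= mulrA mulrC; congr (_ * _).
rewrite -big_split /=; apply: eq_bigr => a ac.
case: ltngtP => [||eq_ac]; rewrite ?mulr1 ?mul1r //.
by move: ac; rewrite -(inj_eq val_inj) /= eq_ac eqxx.
Qed.

Lemma set_weight_swap p xi n (S : {set 'I_n}) (c : 'I_n) : c \notin S ->
    set_weight p xi (c |: S) * \prod_(a < n) pair_factor p (a \in c |: S) false (xi a) (xi c)
  = - (set_weight p xi S * \prod_(a < n) pair_factor p (a \in S) true (xi a) (xi c)).
Proof.
move=> cNS; have memU a : a != c -> (a \in c |: S) = (a \in S).
  by move=> ac; rewrite in_setU1 (negbTE ac).
have swap_sides (W1 W2 P1 Q1 P2 Q2 d : R) : W1 = W2 ->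
    P1 * Q1 = P2 * Q2 -> W1 * P1 * (- d * Q1) = - (W2 * P2 * (d * Q2)).
  by move=> <- PQ; transitivity (- (W1 * d * (P1 * Q1))); [ring | rewrite PQ; ring].
rewrite /set_weight (prod_lt_pairs_split _ c) [in RHS](prod_lt_pairs_split _ c).
rewrite [X in _ * X = _](bigD1 c) //= [X in _ = - (_ * X)](bigD1 c) //=.
rewrite setU11 (negbTE cNS); apply: (swap_sides _ _ _ _ _ _ (pq_den p (xi c) (xi c))).
  apply: eq_bigr => a ac; apply: eq_bigr => b /andP[bc _].
  by rewrite !memU.
rewrite -!big_split /=; apply: eq_bigr => a ac; rewrite !memU //.
case: (a < c)%N; first exact: mulrC.
by rewrite (pair_factorC p _ true) (pair_factorC p _ false) !mulNr mulrC.
Qed.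

Lemma ext_weight_sum_root p xi n m (c : 'I_n) : ext_weight_sum p xi n m (xi c) = 0.
Proof.
have out_c (S : {set 'I_n}) : c \notin S ->
    \prod_(a < n) pair_factor p (a \in S) false (xi a) (xi c) = 0.
  by move=> cNS; rewrite (bigD1 c) //= (negbTE cNS) pair_factor_diag mul0r.
have in_c (S : {set 'I_n}) : c \in S ->
    \prod_(a < n) pair_factor p (a \in S) true (xi a) (xi c) = 0.
  by move=> cS; rewrite (bigD1 c) //= cS pair_factor_diag mul0r.
rewrite /ext_weight_sum (bigID (fun S : {set 'I_n} => c \in S)) /=.
rewrite [X in _ + X](bigID (fun S : {set 'I_n} => c \in S)) /=.
rewrite [X in _ + X + _]big1 => [|S /andP[_ /out_c ->]]; last by rewrite mulr0.
rewrite [X in _ + (X + _)]big1 => [|S /andP[_ /in_c ->]]; last by rewrite mulr0.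
rewrite addr0 add0r (reindex_onto (fun S => c |: S) (fun S => S :\ c)) /=; last first.
  by move=> S /andP[_ cS]; rewrite setD1K.
pose without_c (S : {set 'I_n}) := (#|S|.+1 == m) && (c \notin S).
rewrite [X in X + _](@eq_bigl _ _ _ _ _ _ without_c) => [|S].
  by rewrite -big_split /= big1 // => S /andP[_ cNS]; rewrite set_weight_swap // addNr.
rewrite /without_c setU11 andbT; have [cS|cNS] /= := boolP (c \in S).
  have -> : ((c |: S) :\ c == S) = false by apply/eqP => /setP/(_ c); rewrite !inE eqxx cS.
  by rewrite !andbF.
by rewrite cardsU1 cNS setU1K // eqxx andbT.
Qed.

End PairWeights.

Section Morphisms.
Variables (R R' : comNzRingType) (f : {rmorphism R -> R'}).
Variables (p : R) (xi : nat -> R) (xi' : nat -> R').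
Hypothesis f_xi : f \o xi =1 xi'.

Lemma rmorph_pair_factor sa sb x y :
  f (pair_factor p sa sb x y) = pair_factor (f p) sa sb (f x) (f y).
Proof.
by rewrite /pair_factor /pq_den; case: (sa == sb); [|case: sa];
  rewrite ?(rmorphN, rmorphB, rmorphD, rmorphM, rmorph1).
Qed.

Lemma rmorph_set_weight n (S : {set 'I_n}) : f (set_weight p xi S) = set_weight (f p) xi' S.
Proof.
rewrite /set_weight rmorph_prod; apply: eq_bigr => a _; rewrite rmorph_prod.
by apply: eq_bigr => b _; rewrite rmorph_pair_factor -!f_xi.
Qed.

Lemma rmorph_weight_sum n m : f (weight_sum p xi n m) = weight_sum (f p) xi' n m.
Proof. by rewrite rmorph_sum; apply: eq_bigr => S _; apply: rmorph_set_weight. Qed.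

Lemma rmorph_ext_weight_sum n m y :
  f (ext_weight_sum p xi n m y) = ext_weight_sum (f p) xi' n m (f y).
Proof.
rewrite rmorphD !rmorph_sum; congr (_ + _); apply: eq_bigr => S _;
  rewrite rmorphM rmorph_set_weight rmorph_prod; congr (_ * _);
  by apply: eq_bigr => a _; rewrite rmorph_pair_factor -f_xi.
Qed.

Lemma rmorph_vandermonde_prod n : f (vandermonde_prod xi n) = vandermonde_prod xi' n.
Proof.
rewrite rmorph_prod; apply: eq_bigr => a _; rewrite rmorph_prod.
by apply: eq_bigr => b _; rewrite rmorphB -!f_xi.
Qed.

Lemma rmorph_pq_pascal n m : f (pq_pascal p n m) = pq_pascal (f p) n m.
Proof.
elim: n m => [|n IHn] m /=; first by rewrite rmorph_nat.
rewrite rmorphD rmorphM rmorphXn rmorphB rmorph1 IHn; congr (_ + _).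
by case: m => [|m]; rewrite ?rmorph0 // rmorphM rmorphXn IHn.
Qed.

End Morphisms.

Section Polynomials.
Variable R : idomainType.
Implicit Types (p x : R) (xi : nat -> R).

Lemma size_prod_leq2 n (F : 'I_n -> {poly R}) :
  (forall a, size (F a) <= 2)%N -> (size (\prod_(a < n) F a)%R <= n.+1)%N.
Proof.
move=> F_le2; apply: leq_trans (size_poly_prod_leq _ _) _.
have := @leq_sum _ (index_enum 'I_n) xpredT _ (fun=> 2%N) (fun a _ => F_le2 a).
rewrite big_const_ord iter_addn_0 cardT size_enum_ord => sum_le.
by rewrite leq_subLR addnS ltnS addnn -mul2n (leq_trans sum_le).
Qed.

Lemma size_pair_factor_X p c s b : (size (pair_factor p%:P s b c%:P 'X) <= 2)%N.
Proof.
have size_lin (u v : R) : (size (u%:P * 'X + v%:P)%R <= 2)%N.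
  by rewrite size_MXaddC; case: ifP => // _; rewrite ltnS size_polyC_leq1.
rewrite /pair_factor /pq_den; case: s; case: b => /=; rewrite ?size_XsubC //.
  have -> : - (p%:P + (1 - p%:P) * 'X * c%:P - 'X) = (1 - (1 - p) * c)%:P * 'X + (- p)%:P.
    by rewrite !(polyCB, polyCM, polyCN, polyC1); ring.
  exact: size_lin.
have -> : p%:P + (1 - p%:P) * c%:P * 'X - c%:P = ((1 - p) * c)%:P * 'X + (p - c)%:P.
  by rewrite !(polyCB, polyCM, polyCN, polyC1); ring.
exact: size_lin.
Qed.

Lemma size_ext_weight_sum_X p xi n m :
  (size (ext_weight_sum p%:P (polyC \o xi) n m 'X) <= n.+1)%N.
Proof.
apply: leq_trans (size_polyD _ _) _; rewrite geq_max.
by apply/andP; split; apply/(leq_trans (size_sum _ _ _))/bigmax_leqP => S _;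
  rewrite -(@rmorph_set_weight _ _ polyC p xi) // mul_polyC;
  apply: leq_trans (size_scale_leq _ _) _; apply: size_prod_leq2 => a;
  apply: size_pair_factor_X.
Qed.

Lemma horner_ext_weight_sum_X p xi n m x :
  (ext_weight_sum p%:P (polyC \o xi) n m 'X).[x] = ext_weight_sum p xi n m x.
Proof.
rewrite -horner_evalE (@rmorph_ext_weight_sum _ _ _ _ _ xi) => [|i].
  by rewrite /= !horner_evalE hornerC hornerX.
by rewrite /= horner_evalE hornerC.
Qed.

Lemma weight_sum_factor_uniq p xi n m : uniq (1 :: map xi (iota 0 n)) ->
  weight_sum p xi n m = pq_pascal p n m * vandermonde_prod xi n.
Proof.
elim: n m => [|n IHn] m uniq_xi.
  rewrite /weight_sum /vandermonde_prod big_ord0 mulr1.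
  rewrite big_mkcond (big_pred1 set0) => [|S]; last by apply/esym/eqP/setP => -[].
  by rewrite cards0 /set_weight big_ord0; case: m.
have {}uniq_xi : uniq (1 :: map xi (iota 0 n)).
  by move: uniq_xi; rewrite -addn1 iotaD map_cat -cat_cons cat_uniq => /andP[].
pose P := ext_weight_sum p%:P (polyC \o xi) n m 'X.
pose Q := (pq_pascal p n.+1 m * vandermonde_prod xi n)%:P * \prod_(a < n) ('X - (xi a)%:P).
have Q_eval x : Q.[x] = pq_pascal p n.+1 m * vandermonde_prod xi n * \prod_(a < n) (x - xi a).
  by rewrite hornerM hornerC horner_prod; under eq_bigr do rewrite hornerXsubC.
suff PQ : P = Q.
  by rewrite weight_sum_recr -horner_ext_weight_sum_X -/P PQ Q_eval vandermonde_prod_recr mulrA.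
apply/eqP; rewrite -subr_eq0; apply/eqP.
apply: (roots_geq_poly_eq0 (rs := 1 :: map xi (iota 0 n))) => //; last first.
  rewrite /= size_map size_iota; apply: leq_trans (size_polyD _ _) _.
  rewrite size_polyN geq_max size_ext_weight_sum_X /=.
  rewrite /Q mul_polyC; apply: leq_trans (size_scale_leq _ _) _.
  by apply: size_prod_leq2 => a; rewrite size_XsubC.
have PQ_eval x : (P - Q).[x] = ext_weight_sum p xi n m x - Q.[x].
  by rewrite hornerD hornerN horner_ext_weight_sum_X.
rewrite /= rootE PQ_eval Q_eval ext_weight_sum1 subr_eq0; apply/andP; split.
  by case: m {P Q PQ_eval Q_eval} => [|m] /=; rewrite !IHn //; apply/eqP; ring.
apply/allP => x /mapP[i]; rewrite mem_iota add0n => /andP[_ i_lt_n] ->.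
rewrite rootE PQ_eval Q_eval (ext_weight_sum_root _ _ _ (Ordinal i_lt_n)).
by rewrite (bigD1 (Ordinal i_lt_n)) //= subrr mul0r mulr0 subrr.
Qed.

End Polynomials.

Theorem weight_sum_factor (R : idomainType) (p : R) (xi : nat -> R) n m :
  weight_sum p xi n m = pq_pascal p n m * vandermonde_prod xi n.
Proof.
pose Xi i := (xi i)%:P + 'X^(i.+1).
have coef_Xi i j : (Xi i)`_(j.+1) = (i == j)%:R.
  by rewrite coefD coefC coefXn add0r eqSS eq_sym.
have Xi_inj : injective Xi.
  move=> i j /(congr1 (fun q : {poly R} => q`_(i.+1))); rewrite !coef_Xi eqxx.
  by case: eqP => // _ /eqP; rewrite oner_eq0.
have uniq_Xi : uniq (1 :: map Xi (iota 0 n)).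
  rewrite /= (map_inj_uniq Xi_inj) iota_uniq andbT.
  apply/mapP => -[i _ /(congr1 (fun q : {poly R} => q`_(i.+1)))].
  by rewrite coef_Xi coef1 eqxx => /eqP; rewrite eq_sym oner_eq0.
have Xi0 : horner_eval 0 \o Xi =1 xi.
  by move=> i; rewrite /= horner_evalE hornerD hornerC hornerXn expr0n addr0.
have := congr1 (horner_eval 0) (weight_sum_factor_uniq p%:P m uniq_Xi).
rewrite rmorphM (rmorph_weight_sum _ Xi0) (rmorph_vandermonde_prod Xi0).
by rewrite rmorph_pq_pascal /= horner_evalE hornerC.
Qed.

Section PQNumbers.
Variables (C : numClosedFieldType) (p : C).
Hypotheses (p_gt0 : 0 < p) (p_lt1 : p < 1).

Lemma pq_intD a b : pq_int p (a + b) = p ^+ a * pq_int p b + (1 - p) ^+ b * pq_int p a.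
Proof.
rewrite /pq_int big_split_ord /= addrC !mulr_sumr; congr (_ + _); apply: eq_bigr => i _ /=.
  have -> : ((a + b).-1 - (a + i) = b.-1 - i)%N by have := ltn_ord i; lia.
  by rewrite exprD mulrA.
have -> : ((a + b).-1 - i = b + (a.-1 - i))%N by have := ltn_ord i; lia.
by rewrite exprD mulrCA.
Qed.

Lemma pq_fact0 : pq_fact p 0 = 1.
Proof. by rewrite /pq_fact big_geq. Qed.

Lemma pq_factS k : pq_fact p k.+1 = pq_fact p k * pq_int p k.+1.
Proof. by rewrite /pq_fact big_nat_recr. Qed.

Lemma pq_int_gt0 k : 0 < pq_int p k.+1.
Proof.
have q_gt0 : 0 < 1 - p by rewrite subr_gt0.
rewrite /pq_int big_ord_recl /= expr0 mul1r ltr_wpDr ?exprn_gt0 //.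
by apply: sumr_ge0 => i _; rewrite mulr_ge0 ?exprn_ge0 ?ltW.
Qed.

Lemma pq_fact_neq0 k : pq_fact p k != 0.
Proof.
elim: k => [|k IHk]; first by rewrite pq_fact0 oner_neq0.
by rewrite pq_factS mulf_neq0 // lt0r_neq0 ?pq_int_gt0.
Qed.

Lemma pq_pascal_fact n m : (m <= n)%N ->
  pq_pascal p n m * (pq_fact p (n - m) * pq_fact p m) = pq_fact p n.
Proof.
elim: n m => [|n IHn] [|m] //= m_le.
- by rewrite subn0 pq_fact0 !mul1r.
- by rewrite pq_pascal_n0 subn0 pq_fact0 expr0 mul1r addr0 mulr1 mul1r.
have pascal_succ : pq_pascal p n m.+1 * (pq_fact p (n - m) * pq_fact p m.+1)
    = pq_int p (n - m) * pq_fact p n.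
  move: (m_le); rewrite ltnS leq_eqVlt => /orP[/eqP <-|lt_mn].
    by rewrite pq_pascal_gt // mul0r /pq_int subnn big_ord0 mul0r.
  by rewrite -(IHn m.+1 lt_mn) -(subnSK lt_mn) pq_factS; ring.
transitivity ((1 - p) ^+ m.+1 * (pq_pascal p n m.+1 * (pq_fact p (n - m) * pq_fact p m.+1))
   + p ^+ (n - m) * pq_int p m.+1 * (pq_pascal p n m * (pq_fact p (n - m) * pq_fact p m))).
  by rewrite subSS pq_factS; ring.
rewrite pascal_succ IHn // pq_factS.
have -> : pq_int p n.+1 = pq_int p (n - m + m.+1) by congr pq_int; lia.
by rewrite pq_intD; ring.
Qed.

Lemma pq_pascalE n m : pq_pascal p n m = pq_binom p n m.
Proof.
rewrite /pq_binom; case: leqP => [m_le|lt_nm]; last exact: pq_pascal_gt.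
by rewrite -(pq_pascal_fact m_le) mulfK // mulf_neq0 ?pq_fact_neq0.
Qed.

End PQNumbers.

Lemma prod_lt_pairs_by_membership (R : comNzRingType) n (S : {set 'I_n})
    (F G : 'I_n -> 'I_n -> R) :
    \prod_(a < n) \prod_(b < n | [&& (a < b)%N, a \notin S & b \notin S]) F a b
  * \prod_(a < n) \prod_(b < n | [&& (a < b)%N, a \in S & b \in S]) F a b
  * \prod_(a < n) \prod_(b < n | [&& (a < b)%N, a \in S & b \notin S]) G a b
  = \prod_(a < n) \prod_(b < n | (a < b)%N)
      (if (a \in S) == (b \in S) then F a b else if a \in S then G a b else 1).
Proof.
rewrite -!big_split /=; apply: eq_bigr => a _; rewrite !big_mkcondr -!big_split /=.
by apply: eq_bigr => b _; case: (a \in S); case: (b \in S); rewrite /= ?mulr1 ?mul1r.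
Qed.

Theorem lemma2p5 (C : numClosedFieldType) (p : C) (n m : nat)
  (xi : nat -> C)
  (hp0 : 0 < p) (hp1 : p < 1)
  (hn : (1 <= n)%N) (hm : (m <= n)%N)
  (hden : forall a b : 'I_n, (a < b)%N ->
           p + (1 - p) * xi a * xi b - xi a != 0) :
  \sum_(S : {set 'I_n} | #|S| == m)
     ((\prod_(a : 'I_n) \prod_(b : 'I_n | [&& (a < b)%N, a \notin S & b \notin S])
          Tba p xi b a)
    * (\prod_(a : 'I_n) \prod_(b : 'I_n | [&& (a < b)%N, a \in S & b \in S])
          Tba p xi b a)
    * (\prod_(a : 'I_n) \prod_(b : 'I_n | [&& (a < b)%N, a \in S & b \notin S])
          Sba p xi b a))
  = pq_binom p n m *
    \prod_(a : 'I_n) \prod_(b : 'I_n | (a < b)%N) Tba p xi b a.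
Proof.
pose D := \prod_(a < n) \prod_(b < n | (a < b)%N) pq_den p (xi a) (xi b).
have factorE (S : {set 'I_n}) (a b : 'I_n) : (a < b)%N ->
    (if (a \in S) == (b \in S) then Tba p xi b a else if a \in S then Sba p xi b a else 1)
  = pair_factor p (a \in S) (b \in S) (xi a) (xi b) / pq_den p (xi a) (xi b).
  move=> lt_ab; rewrite /pair_factor /Tba /Sba /pq_den.
  case: (a \in S); case: (b \in S) => //=; first by rewrite [_ * xi b * xi a]mulrAC.
  by rewrite divff ?hden.
rewrite (eq_bigr (fun S => set_weight p xi S / D)) => [|S _]; last first.
  rewrite prod_lt_pairs_by_membership /set_weight /D -!prodf_div.
  by apply: eq_bigr => a _; rewrite -prodf_div; apply: eq_bigr => b; apply: factorE.
rewrite -mulr_suml -/(weight_sum p xi n m) weight_sum_factor pq_pascalE //.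
rewrite -mulrA /vandermonde_prod /D.
by rewrite -prodf_div; congr (_ * _); apply: eq_bigr => a _; rewrite -prodf_div.
Qed.
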